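(* Let $N$ be a composite number with $N=\prod_{i=1}^{a}p_i^{2n_i}\prod_{j=1}^{b}q_j^{2m_j+1}$, where $p_1,\ldots,p_a,q_1,\ldots,q_b$ are distinct primes, $n_i\geq 1$ and $m_j\geq 0$ are integers. Then $\omega(\Gamma_E(\mathbb{Z}_N))=\chi(\Gamma_E(\mathbb{Z}_N))=\prod_{i=1}^{a}(n_i+1)\prod_{j=1}^{b}(m_j+1)+b-1.$
   Context: $\mathbb{Z}_N$ is the ring of integers modulo $N$. For a finite commutative ring $R$ with unity, define $x\sim_R y$ iff $Ann(x)=Ann(y)$, with class $C_x$; the compressed zero-divisor graph $\Gamma_E(R)$ has as vertices the classes other than $C_0$ and $C_1$, with distinct $C_x,C_y$ adjacent iff $xy=0$. For $R=\mathbb{Z}_N$ the vertices of $\Gamma_E(\mathbb{Z}_N)$ correspond to the proper divisors $d$ of $N$ ($1<d<N$), two distinct ones $d,d'$ being adjacent iff $N\mid dd'$. $\omega$ is the clique number and $\chi$ the chromatic number. *)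

From mathcomp Require Import all_boot.
Set Implicit Arguments. Unset Strict Implicit. Unset Printing Implicit Defensive.

(* A finite simple graph is given by a vertex set V : {set T} on a finType T
   and an adjacency relation e (only its restriction to distinct vertices of V
   matters). *)
Section Graphs.
Variables (T : finType) (V : {set T}) (e : rel T).

Definition is_clique (K : {set T}) : bool :=
  (K \subset V) && [forall u in K, forall v in K, (u != v) ==> e u v].

Definition clique_number : nat := \max_(K : {set T} | is_clique K) #|K|.

Definition colorable (k : nat) : bool :=
  [exists f : {ffun T -> 'I_k},
     [forall u in V, forall v in V, ((u != v) && e u v) ==> (f u != f v)]].

Lemma colorable_card : colorable #|T|.
Proof.
apply/existsP; exists [ffun x => enum_rank x].
apply/forallP => u; apply/implyP => _; apply/forallP => v; apply/implyP => _.
apply/implyP => /andP [uv _]; rewrite !ffunE.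
by apply: contra uv => /eqP /enum_rank_inj ->.
Qed.

Lemma colorable_ex : exists k, colorable k.
Proof. by exists #|T|; exact: colorable_card. Qed.

Definition chromatic_number : nat := ex_minn colorable_ex.

End Graphs.

(* Gamma_E(Z_N): vertices = proper divisors d of N with 1 < d < N,
   distinct d, d' adjacent iff N %| d * d'.  Vertices are encoded in 'I_N.+1. *)
Definition ZE_vertices (N : nat) : {set 'I_N.+1} :=
  [set d : 'I_N.+1 | [&& 1 < d, d < N & d %| N]].

Definition ZE_adj (N : nat) : rel 'I_N.+1 :=
  fun d d' => N %| (d * d').

Definition omega_ZE (N : nat) : nat :=
  clique_number (ZE_vertices N) (@ZE_adj N).

Definition chi_ZE (N : nat) : nat :=
  chromatic_number (ZE_vertices N) (@ZE_adj N).

From mathcomp Require Import all_boot zify.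
Set Implicit Arguments. Unset Strict Implicit. Unset Printing Implicit Defensive.

(* Write e_p for the exponent of the prime p in N, and call a divisor d of N
   big when N divides d^2, i.e. when e_p/2 <= v_p(d) <= e_p for every p
   (rounding e_p/2 up).  Two big divisors are always adjacent, and so is a big
   divisor with c_r = N / r^(ceil(e_r/2)) for any prime r | N; for distinct r,
   r' the vertices c_r and c_r' are adjacent as well.  Hence the big proper
   divisors together with the c_r for e_r odd (the c_r for e_r even are big)
   form a clique K.  Colour a big vertex by itself and any other vertex u by c_r
   for some prime r with 2 v_r(u) < e_r: two adjacent vertices never receive
   the same colour, since v_r of their product is below e_r.  So K is both a
   maximum clique and a set of colours, and omega = chi = |K|.  Finally the big
   divisors are counted by choosing v_p(d) in [ceil(e_p/2), e_p], which leaves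
   floor(e_p/2) + 1 choices per prime; N itself is big, and there is one c_r
   per prime with odd exponent. *)

Section CliqueAndColouring.
Variables (T : finType) (V : {set T}) (e : rel T).

Lemma clique_card_leq_colorable (K : {set T}) k :
  is_clique V e K -> colorable V e k -> #|K| <= k.
Proof.
case/andP=> KV /forall_inP K_clique /existsP[f /forall_inP f_proper].
have f_inj : {in K &, injective f}.
  move=> u v uK vK fuv; apply/eqP; apply/negPn/negP => uv.
  have euv : e u v by have /forall_inP/(_ v vK)/implyP := K_clique u uK; apply.
  have /forall_inP/(_ v (subsetP KV _ vK))/implyP := f_proper u (subsetP KV _ uK).
  by rewrite uv euv fuv eqxx => /(_ isT).
by rewrite -(card_in_imset f_inj); apply: leq_trans (max_card _) _; rewrite card_ord.
Qed.

Lemma colorable_retract (K : {set T}) (f : T -> T) x0 :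
    x0 \in V -> {in V, forall u, f u \in K} ->
    {in V &, forall u v, u != v -> e u v -> f u != f v} ->
  colorable V e #|K|.
Proof.
move=> x0V fK f_proper; have x0K := fK x0 x0V.
apply/existsP; exists [ffun u => enum_rank_in x0K (f u)].
apply/forall_inP => u uV; apply/forall_inP => v vV.
apply/implyP => /andP[uv euv]; rewrite !ffunE.
apply: contra (f_proper u v uV vV uv euv) => /eqP fuv.
by rewrite -(enum_rankK_in x0K (fK _ uV)) fuv enum_rankK_in ?fK.
Qed.

Lemma clique_chromatic_eq (K : {set T}) (f : T -> T) x0 :
    x0 \in V -> is_clique V e K -> {in V, forall u, f u \in K} ->
    {in V &, forall u v, u != v -> e u v -> f u != f v} ->
  clique_number V e = #|K| /\ chromatic_number V e = #|K|.
Proof.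
move=> x0V K_clique fK f_proper.
have K_colorable := colorable_retract x0V fK f_proper.
split.
  apply/eqP; rewrite eqn_leq (leq_bigmax_cond _ K_clique) andbT.
  by apply/bigmax_leqP => K' /clique_card_leq_colorable; apply.
rewrite /chromatic_number; case: ex_minnP => k k_colorable k_min.
by apply/eqP; rewrite eqn_leq k_min // (clique_card_leq_colorable K_clique).
Qed.

End CliqueAndColouring.

Lemma dvdn_lognP m n : 0 < m -> 0 < n ->
  reflect (forall p, prime p -> logn p m <= logn p n) (m %| n).
Proof.
move=> m_gt0 n_gt0; apply: (iffP idP) => [m_n p _ | le_mn].
  exact: dvdn_leq_log.
apply/(dvdn_partP _ m_gt0) => p; rewrite mem_primes => /and3P[p_prime _ _].
by rewrite p_part pfactor_dvdn // le_mn.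
Qed.

Lemma eqn_logn m n : 0 < m -> 0 < n ->
  (forall p, prime p -> logn p m = logn p n) -> m = n.
Proof.
move=> m_gt0 n_gt0 eq_mn; apply/eqP; rewrite eqn_dvd.
by apply/andP; split; apply/dvdn_lognP => // p /eq_mn ->.
Qed.

Lemma logn_gt0_leq p n : 0 < n -> 0 < logn p n -> p <= n.
Proof. by move=> n_gt0; rewrite logn_gt0 mem_primes => /and3P[_ _ /dvdn_leq]; apply. Qed.

Lemma inord_dvdnK N d : 0 < N -> d %| N -> (inord d : 'I_N.+1) = d :> nat.
Proof. by move=> N_gt0 d_N; rewrite inordK // ltnS dvdn_leq. Qed.

Lemma dvdn_mul_sqr N x y : N %| x * x -> N %| y * y -> N %| x * y.
Proof. by move=> N_xx N_yy; rewrite -(@dvdn_pexp2r _ _ 2) // expnMn -!mulnn dvdn_mul. Qed.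

Lemma ndvdn_mul_logn N r u v : 0 < u -> 0 < v ->
  2 * logn r u < logn r N -> 2 * logn r v <= logn r N -> ~~ (N %| u * v).
Proof.
move=> u_gt0 v_gt0 u_def v_le; apply/negP => /(dvdn_leq_log r (leq_mul u_gt0 v_gt0)).
rewrite lognM //; lia.
Qed.

Definition halve_part (N r : nat) : nat := N %/ r ^ uphalf (logn r N).

Section HalvePart.
Variables (N r : nat).
Hypotheses (N_gt0 : 0 < N) (r_prime : prime r).

Lemma halve_partK : halve_part N r * r ^ uphalf (logn r N) = N.
Proof. by rewrite divnK // pfactor_dvdn //; lia. Qed.

Lemma halve_part_gt0 : 0 < halve_part N r.
Proof. by have := N_gt0; rewrite -[X in 0 < X]halve_partK muln_gt0 => /andP[]. Qed.

Lemma halve_part_dvdn : halve_part N r %| N.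
Proof. by rewrite /halve_part dvdn_div // pfactor_dvdn //; lia. Qed.

Lemma logn_halve_part s :
  logn s (halve_part N r) = if s == r then (logn r N)./2 else logn s N.
Proof.
rewrite logn_div ?pfactor_dvdn //; last by lia.
rewrite lognX (logn_prime s r_prime).
by have [->|rs] := eqVneq s r; rewrite ?eqxx ?(negbTE rs); lia.
Qed.

Lemma dvdn_mul_halve_part u : 0 < u -> uphalf (logn r N) <= logn r u ->
  N %| u * halve_part N r.
Proof.
move=> u_gt0 u_r; rewrite -[X in X %| _]halve_partK mulnC.
by rewrite dvdn_mul // pfactor_dvdn.
Qed.

End HalvePart.

Lemma halve_part_inj N r r' : 0 < N -> prime r -> prime r' -> 0 < logn r N ->
  halve_part N r = halve_part N r' -> r = r'.
Proof.
move=> N_gt0 r_prime r'_prime r_N eq_rr'; apply/eqP/negP => /negP rr'.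
have := congr1 (logn r) eq_rr'.
by rewrite !logn_halve_part // eqxx (negbTE rr'); lia.
Qed.

Section BigDivisors.
Variable N : nat.
Hypothesis N_gt0 : 0 < N.

Definition big_divisors : {set 'I_N.+1} :=
  [set d : 'I_N.+1 | (d %| N) && (N %| d * d)].

Definition odd_primes : {set 'I_N.+1} :=
  [set r : 'I_N.+1 | prime r && odd (logn r N)].

Lemma big_divisorP d : 0 < d ->
  (d %| N) && (N %| d * d) <->
  (forall s, prime s -> uphalf (logn s N) <= logn s d <= logn s N).
Proof.
move=> d_gt0; have dd_gt0 : 0 < d * d := leq_mul d_gt0 d_gt0; split.
  case/andP=> /dvdn_lognP d_N /dvdn_lognP N_dd s s_prime.
  by have := d_N d_gt0 N_gt0 s s_prime; have := N_dd N_gt0 dd_gt0 s s_prime; rewrite lognM //; lia.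
move=> d_bounds; apply/andP; split; apply/dvdn_lognP => // s /d_bounds;
  rewrite ?lognM //; lia.
Qed.

End BigDivisors.

Section CompressedZeroDivisorGraph.
Variable N : nat.

Definition halve_vertices : {set 'I_N.+1} :=
  [set inord (halve_part N r) | r : 'I_N.+1 in odd_primes N].

Definition ZE_core : {set 'I_N.+1} := (big_divisors N :\ ord_max) :|: halve_vertices.

Definition ZE_color (u : 'I_N.+1) : 'I_N.+1 :=
  if [pick r : 'I_N.+1 | prime r && (2 * logn r u < logn r N)] is Some r
  then inord (halve_part N r) else u.

Hypotheses (N_gt1 : 1 < N) (N_composite : ~~ prime N).

Let N_gt0 : 0 < N := ltnW N_gt1.

Lemma big_vertices : big_divisors N :\ ord_max = [set d in ZE_vertices N | N %| d * d].
Proof.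
apply/setP => d; rewrite !inE -val_eqE /=.
apply/and3P/andP => [[d_N d_div N_dd] | [/and3P[d_gt1 d_lt d_N] N_dd]]; last first.
  by rewrite d_N N_dd neq_ltn d_lt.
split=> //; rewrite d_div andbT.
have d_gt0 := dvdn_gt0 N_gt0 d_div.
have := dvdn_leq N_gt0 d_div; have := dvdn_leq (leq_mul d_gt0 d_gt0) N_dd; nia.
Qed.

Lemma halve_part_vertex r : prime r -> 0 < logn r N ->
  (inord (halve_part N r) : 'I_N.+1) \in ZE_vertices N.
Proof.
move=> r_prime r_N; have hK := halve_partK N_gt0 r_prime.
have h_gt0 := halve_part_gt0 N_gt0 r_prime.
have rk_gt1 : 1 < r ^ uphalf (logn r N).
  by apply: leq_trans (ltn_expl _ (prime_gt1 r_prime)); rewrite ltnS uphalf_gt0.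
rewrite inE inord_dvdnK ?halve_part_dvdn // andbT; apply/andP; split; last first.
  by rewrite -[X in _ < X]hK ltn_Pmulr.
rewrite ltn_neqAle h_gt0 andbT eq_sym; apply: contraNneq N_composite => h1.
move: hK; rewrite h1 mul1n => N_eq.
have e_eq : logn r N = uphalf (logn r N) by rewrite -[in LHS]N_eq pfactorK.
have k1 : uphalf (logn r N) = 1 by lia.
by rewrite -N_eq k1 expn1.
Qed.

Lemma halve_verticesP x : x \in halve_vertices ->
  exists2 r, prime r /\ odd (logn r N) & x = inord (halve_part N r).
Proof. by case/imsetP => r; rewrite inE => /andP[r_prime r_odd] ->; exists r. Qed.

Lemma ZE_core_sub : ZE_core \subset ZE_vertices N.
Proof.
apply/subsetP => x; rewrite in_setU big_vertices => /orP[|].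
  by rewrite inE => /andP[].
by case/halve_verticesP => r [r_prime r_odd] ->; apply: halve_part_vertex => //; lia.
Qed.

Lemma ZE_core_clique : is_clique (ZE_vertices N) (@ZE_adj N) ZE_core.
Proof.
rewrite /is_clique ZE_core_sub; apply/forall_inP => x xK; apply/forall_inP => y yK.
apply/implyP => xy; rewrite /ZE_adj.
have big_halve u v : u \in big_divisors N :\ ord_max -> v \in halve_vertices ->
    N %| u * v.
  rewrite big_vertices inE => /andP[uV N_uu] /halve_verticesP[r [r_prime _] ->].
  have u_gt0 : 0 < u by move: uV; rewrite inE => /and3P[/ltnW].
  rewrite inord_dvdnK ?halve_part_dvdn // dvdn_mul_halve_part //.
  have := dvdn_leq_log r (leq_mul u_gt0 u_gt0) N_uu; rewrite lognM //; lia.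
move: xK yK; rewrite !in_setU => /orP[x_big | x_h] /orP[y_big | y_h].
- by move: x_big y_big; rewrite !inE => /and3P[_ _ ?] /and3P[_ _ ?]; apply: dvdn_mul_sqr.
- exact: big_halve.
- by rewrite mulnC big_halve.
case/halve_verticesP: x_h xy => r [r_prime r_odd] ->.
case/halve_verticesP: y_h => r' [r'_prime r'_odd] -> hrr'.
have r_N : 0 < logn r N by lia.
have r'_N : 0 < logn r' N by lia.
rewrite !inord_dvdnK ?halve_part_dvdn //; apply: dvdn_mul_halve_part => //.
  exact: halve_part_gt0.
have [eq_rr'|neq_rr'] := eqVneq r r'; first by rewrite eq_rr' eqxx in hrr'.
by rewrite logn_halve_part // eq_sym (negbTE neq_rr'); lia.
Qed.

Lemma ZE_colorP u : u \in ZE_vertices N ->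
  (N %| u * u /\ ZE_color u = u) \/
  exists2 r, prime r /\ 2 * logn r u < logn r N & ZE_color u = inord (halve_part N r).
Proof.
rewrite inE => /and3P[u_gt1 _ _]; have u_gt0 := ltnW u_gt1; rewrite /ZE_color.
case: pickP => [r /andP[r_prime r_def] | no_def]; [right; exists r => // | left].
split=> //; apply/dvdn_lognP; rewrite ?muln_gt0 ?u_gt0 // => s s_prime.
rewrite lognM //; have [s_le | s_gt] := leqP s N; last by rewrite ltn_log0.
by have := no_def (inord s); rewrite inordK ?ltnS // s_prime /=; lia.
Qed.

Lemma ZE_color_in_core u : u \in ZE_vertices N -> ZE_color u \in ZE_core.
Proof.
move=> uV; rewrite in_setU big_vertices.
case: (ZE_colorP uV) => [[N_uu ->] | [r [r_prime r_def] ->]].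
  by rewrite inE uV N_uu.
have r_N : 0 < logn r N by lia.
have r_le := logn_gt0_leq N_gt0 r_N.
case r_odd : (odd (logn r N)).
  apply/orP; right; apply/imsetP; exists (inord r); last by rewrite inordK.
  by rewrite inE inordK // r_prime r_odd.
apply/orP; left; rewrite inE halve_part_vertex //= inord_dvdnK ?halve_part_dvdn //.
have /andP[] // : (halve_part N r %| N) && (N %| halve_part N r * halve_part N r).
apply/(big_divisorP N_gt0) => [|s s_prime]; first exact: halve_part_gt0.
rewrite logn_halve_part //; have [->|sr] := eqVneq s r; rewrite ?eqxx ?(negbTE sr); lia.
Qed.

Lemma ZE_color_proper : {in ZE_vertices N &, forall u v,
  u != v -> ZE_adj u v -> ZE_color u != ZE_color v}.
Proof.
move=> u v uV vV uv; rewrite /ZE_adj; apply: contraL => /eqP same.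
have [u_gt0 v_gt0] : 0 < u /\ 0 < v.
  by move: uV vV; rewrite !inE => /and3P[/ltnW ? _ _] /and3P[/ltnW ? _ _].
have logn_color w r : prime r -> ZE_color w = inord (halve_part N r) ->
    logn r (ZE_color w) = (logn r N)./2.
  by move=> r_prime ->; rewrite inord_dvdnK ?halve_part_dvdn // logn_halve_part // eqxx.
case: (ZE_colorP uV) => [[_ cu] | [r [r_prime u_def] cu]];
  case: (ZE_colorP vV) => [[_ cv] | [r' [r'_prime v_def] cv]].
- by move: uv; rewrite -cu -cv same eqxx.
- rewrite mulnC (ndvdn_mul_logn (r := r')) // -cu same.
  by rewrite (logn_color v r') //; lia.
- rewrite (ndvdn_mul_logn (r := r)) // -cv -same.
  by rewrite (logn_color u r) //; lia.
have r_N : 0 < logn r N by lia.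
have eq_rr' : r = r'.
  apply: (halve_part_inj N_gt0) => //.
  by have := congr1 (@nat_of_ord _) same; rewrite cu cv !inord_dvdnK ?halve_part_dvdn.
by subst r'; rewrite (ndvdn_mul_logn (r := r)) //; lia.
Qed.

Lemma card_ZE_core : #|ZE_core| = #|big_divisors N|.-1 + #|odd_primes N|.
Proof.
have N_big : ord_max \in big_divisors N by rewrite inE dvdnn dvdn_mulr.
have big_halve_disjoint : (big_divisors N :\ ord_max) :&: halve_vertices = set0.
  apply/eqP/set0Pn => -[x /setIP[]].
  rewrite big_vertices inE => /andP[_ N_xx] /halve_verticesP[r [r_prime r_odd] x_eq].
  have x_gt0 : 0 < x by rewrite x_eq inord_dvdnK ?halve_part_dvdn ?halve_part_gt0.
  move: N_xx => /(dvdn_leq_log r (leq_mul x_gt0 x_gt0)).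
  by rewrite lognM // x_eq inord_dvdnK ?halve_part_dvdn // logn_halve_part // eqxx; lia.
rewrite cardsU big_halve_disjoint cards0 subn0 (cardsD1 ord_max (big_divisors N)) N_big.
congr (_ + _); rewrite card_in_imset // => r r'.
rewrite !inE => /andP[r_prime r_odd] /andP[r'_prime _] /(congr1 (@nat_of_ord _)).
rewrite !inord_dvdnK ?halve_part_dvdn // => eq_h.
by apply/val_inj/(halve_part_inj N_gt0 r_prime r'_prime) => //; lia.
Qed.

Theorem omega_chi_ZE_composite :
  omega_ZE N = #|big_divisors N|.-1 + #|odd_primes N| /\
  chi_ZE N = #|big_divisors N|.-1 + #|odd_primes N|.
Proof.
have pdiv_vertex : (inord (pdiv N) : 'I_N.+1) \in ZE_vertices N.
  rewrite inE inord_dvdnK ?pdiv_dvd // prime_gt1 ?pdiv_prime //=.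
  rewrite ltn_neqAle pdiv_leq // !andbT; apply: contraNneq N_composite => <-.
  exact: pdiv_prime.
rewrite -card_ZE_core.
exact: clique_chromatic_eq pdiv_vertex ZE_core_clique ZE_color_in_core ZE_color_proper.
Qed.

End CompressedZeroDivisorGraph.

Section PrimePowerProduct.
Variables (I : finType) (R : I -> nat).
Hypotheses (R_prime : forall z, prime (R z)) (R_inj : injective R).

Lemma prod_pexp_gt0 (x : I -> nat) : 0 < \prod_z R z ^ x z.
Proof. by rewrite prodn_gt0 // => z; rewrite expn_gt0 prime_gt0. Qed.

Lemma dvdn_prod_pexp (x y : I -> nat) : (forall z, x z <= y z) ->
  \prod_z R z ^ x z %| \prod_z R z ^ y z.
Proof.
move=> le_xy; apply: (big_ind2 (fun m n => m %| n)) => // [? ? ? ? ? ? | z _].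
  exact: dvdn_mul.
exact: dvdn_exp2l.
Qed.

Lemma logn_prod_pexp (x : I -> nat) s :
  logn s (\prod_z R z ^ x z) = \sum_z (s == R z) * x z.
Proof.
apply: (proj2 (big_ind2 (fun m l => 0 < m /\ logn s m = l) _ _ _)) => //.
- by rewrite logn1.
- move=> m1 l1 m2 l2 [m1_gt0 <-] [m2_gt0 <-].
  by split; [rewrite muln_gt0 m1_gt0 | rewrite lognM].
- by move=> z _; rewrite expn_gt0 prime_gt0 // lognX logn_prime // mulnC.
Qed.

Lemma logn_prod_pexp_at (x : I -> nat) z0 : logn (R z0) (\prod_z R z ^ x z) = x z0.
Proof.
rewrite logn_prod_pexp (bigD1 z0) //= eqxx mul1n big1 ?addn0 // => z z_neq.
by rewrite (inj_eq R_inj) eq_sym (negbTE z_neq).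
Qed.

Lemma logn_prod_pexp_out (x : I -> nat) s : s \notin codom R ->
  logn s (\prod_z R z ^ x z) = 0.
Proof.
move=> s_out; rewrite logn_prod_pexp big1 // => z _.
by rewrite (negbTE (contraNneq _ s_out)) // => ->; apply: codom_f.
Qed.

Variables (X : I -> nat) (N : nat).
Hypothesis N_def : N = \prod_z R z ^ X z.

Let N_gt0 : 0 < N. Proof. by rewrite N_def prod_pexp_gt0. Qed.

Let logn_R z : logn (R z) N = X z. Proof. by rewrite N_def logn_prod_pexp_at. Qed.

Let logn_out s : s \notin codom R -> logn s N = 0.
Proof. by rewrite N_def; apply: logn_prod_pexp_out. Qed.

Definition big_offsets := {dffun forall z : I, 'I_((X z)./2).+1}.

Definition big_divisor_of (k : big_offsets) : nat :=
  \prod_z R z ^ (uphalf (X z) + k z).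

Let logn_big_divisor_of k z : logn (R z) (big_divisor_of k) = uphalf (X z) + k z.
Proof. exact: logn_prod_pexp_at. Qed.

Let big_divisor_of_dvdn k : big_divisor_of k %| N.
Proof. by rewrite N_def dvdn_prod_pexp // => z; case: (k z) => /= kz; lia. Qed.

Lemma big_divisorsE : big_divisors N = [set inord (big_divisor_of k) | k : big_offsets].
Proof.
apply/setP => d; rewrite inE; apply/idP/imsetP => [d_big | [k _ ->]]; last first.
  rewrite inord_dvdnK //; apply/(big_divisorP N_gt0) => [|s s_prime].
    exact: prod_pexp_gt0.
  have [/codomP[z ->] | s_out] := boolP (s \in codom R).
    by rewrite logn_big_divisor_of logn_R; case: (k z) => /= kz; lia.
  by rewrite logn_prod_pexp_out // logn_out.
have d_gt0 : 0 < d by case/andP: d_big => /(dvdn_gt0 N_gt0).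
have d_bounds := (big_divisorP N_gt0 d_gt0).1 d_big.
exists [ffun z => inord (logn (R z) d - uphalf (X z))] => //.
apply/val_inj; rewrite /= inord_dvdnK //; apply: eqn_logn => // [|s s_prime].
  exact: prod_pexp_gt0.
have := d_bounds s s_prime.
have [/codomP[z ->] | s_out] := boolP (s \in codom R).
  by rewrite logn_big_divisor_of ffunE logn_R => /andP[lo hi]; rewrite inordK; lia.
by rewrite logn_prod_pexp_out // logn_out //; lia.
Qed.

Lemma card_big_divisors : #|big_divisors N| = \prod_z ((X z)./2).+1.
Proof.
rewrite big_divisorsE card_imset => [|k k' /(congr1 (@nat_of_ord _))]; last first.
  rewrite !inord_dvdnK // => eq_kk'; apply/ffunP => z; apply/val_inj.
  by have := congr1 (logn (R z)) eq_kk'; rewrite !logn_big_divisor_of => /addnI.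
rewrite card_dep_ffun foldrE /image_mem big_map big_enum /=.
by apply: eq_bigr => z _; rewrite card_ord.
Qed.

Lemma card_odd_primes : #|odd_primes N| = #|[set z | odd (X z)]|.
Proof.
have R_le z : odd (X z) -> R z <= N.
  by move=> X_odd; apply: logn_gt0_leq => //; rewrite logn_R; lia.
have -> : odd_primes N = [set inord (R z) | z in [set z | odd (X z)]].
  apply/setP => r; rewrite inE; apply/andP/imsetP => [[r_prime r_odd] | [z]].
    have [/codomP[z r_eq] | r_out] := boolP (val r \in codom R).
      exists z; first by rewrite inE -logn_R -r_eq.
      by rewrite -r_eq inord_val.
    by move: r_odd; rewrite logn_out.
  by rewrite inE => X_odd ->; rewrite inordK ?ltnS ?R_le // R_prime logn_R.
rewrite card_in_imset // => z z'; rewrite !inE => X_odd X'_odd.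
by move/(congr1 (@nat_of_ord _)); rewrite !inordK ?ltnS ?R_le //; apply: R_inj.
Qed.

End PrimePowerProduct.

Theorem lemma5p1 (N a b : nat) (p n : 'I_a -> nat) (q m : 'I_b -> nat) :
  1 < N -> ~~ prime N ->
  (forall i, prime (p i)) -> (forall j, prime (q j)) ->
  injective p -> injective q -> (forall i j, p i != q j) ->
  (forall i, 1 <= n i) ->
  N = (\prod_(i < a) p i ^ (2 * n i)) * (\prod_(j < b) q j ^ (2 * m j + 1)) ->
  omega_ZE N = (\prod_(i < a) (n i + 1)) * (\prod_(j < b) (m j + 1)) + b - 1 /\
  chi_ZE N = (\prod_(i < a) (n i + 1)) * (\prod_(j < b) (m j + 1)) + b - 1.
Proof.
move=> N_gt1 N_composite p_prime q_prime p_inj q_inj pq_neq _ N_def.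
pose R (z : 'I_a + 'I_b) := match z with inl i => p i | inr j => q j end.
pose X (z : 'I_a + 'I_b) := match z with inl i => 2 * n i | inr j => 2 * m j + 1 end.
have R_prime z : prime (R z) by case: z.
have R_inj : injective R.
  case=> [i|j] [i'|j'] /= eq_R; first by rewrite (p_inj _ _ eq_R).
  - by move: (pq_neq i j'); rewrite eq_R eqxx.
  - by move: (pq_neq i' j); rewrite eq_R eqxx.
  by rewrite (q_inj _ _ eq_R).
have N_prod : N = \prod_z R z ^ X z by rewrite N_def big_sumType.
have card_big : #|big_divisors N| = (\prod_(i < a) (n i + 1)) * (\prod_(j < b) (m j + 1)).
  rewrite (card_big_divisors R_prime R_inj N_prod) big_sumType.
  by congr (_ * _); apply: eq_bigr => ? _ /=; lia.
have card_odd : #|odd_primes N| = b.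
  rewrite (card_odd_primes R_prime R_inj N_prod) -sum1dep_card big_sumType /=.
  rewrite big_pred0 => [|i]; last by rewrite oddM.
  rewrite (eq_bigl xpredT) => [|j]; last by rewrite addn1 /= oddM.
  by rewrite add0n sum1_card card_ord.
have prod_gt0 : 0 < (\prod_(i < a) (n i + 1)) * (\prod_(j < b) (m j + 1)).
  by rewrite muln_gt0 !prodn_gt0 // => ?; rewrite addn1.
have [-> ->] := omega_chi_ZE_composite N_gt1 N_composite.
by rewrite card_big card_odd; split; lia.
Qed.
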